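(* For an integer $k\ge1$ let $F_0(k)=0$, $F_1(k)=1$, $F_n(k)=kF_{n-1}(k)+F_{n-2}(k)$ for $n\ge2$, and for $n\ge2$ let $I_{k,n}(t)=\#(t\mathcal{T}\cap\mathbb{Z}^2)$ where $\mathcal{T}$ is the triangle with vertices $(0,0)$, $\left(\frac{F_{n-1}(k)}{F_n(k)},0\right)$ and $\left(0,\frac{F_n(k)}{F_{n-1}(k)}\right)$. Then for every $k\ge1$ and every even integer $n\ge2$, $F_n(k)$ is a common quasi-period of $I_{k,n}(t)$ and $I_{k,n+1}(t)$.
   Context: The Ehrhart function of a rational polygon is a quasipolynomial $\sum_i c_i(t)t^i$ with periodic coefficient functions $c_i$; an integer $N$ is a quasi-period if every $c_i$ is periodic with period $N$. *)

From HB Require Import structures.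
From mathcomp Require Import all_boot all_order all_algebra.
Set Implicit Arguments. Unset Strict Implicit. Unset Printing Implicit Defensive.
Import Order.TTheory GRing.Theory Num.Theory.
Local Open Scope ring_scope.

Fixpoint Fib (k : nat) (n : nat) : nat :=
  match n with
  | 0 => 0
  | 1 => 1
  | (m.+1 as p).+1 => k * Fib k p + Fib k m
  end%N.

Definition in_triangle (v0 v1 v2 p : rat * rat) : Prop :=
  exists l0 l1 l2 : rat,
    [/\ 0 <= l0, 0 <= l1, 0 <= l2 & l0 + l1 + l2 = 1] /\
    p.1 = l0 * v0.1 + l1 * v1.1 + l2 * v2.1 /\
    p.2 = l0 * v0.2 + l1 * v1.2 + l2 * v2.2.

Definition in_dilate (t : nat) (v0 v1 v2 p : rat * rat) : Prop :=
  exists q, in_triangle v0 v1 v2 q /\ p = (t%:R * q.1, t%:R * q.2).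

Definition TriV0 : rat * rat := (0, 0).
Definition TriV1 (k n : nat) : rat * rat := ((Fib k n.-1)%:R / (Fib k n)%:R, 0).
Definition TriV2 (k n : nat) : rat * rat := (0, (Fib k n)%:R / (Fib k n.-1)%:R).

Definition lattice_pt (z : int * int) : rat * rat := (z.1%:~R, z.2%:~R).

Definition I_is (k n t m : nat) : Prop :=
  exists s : seq (int * int),
    [/\ uniq s, size s = m &
        forall z, z \in s <-> in_dilate t TriV0 (TriV1 k n) (TriV2 k n) (lattice_pt z)].

Definition quasi_period (f : nat -> nat -> Prop) (N : nat) : Prop :=
  (0 < N)%N /\
  exists (d : nat) (c : nat -> nat -> rat),
    (forall i t, c i (t + N)%N = c i t) /\
    (forall t : nat, (1 <= t)%N ->
       exists m : nat, f t m /\ m%:R = \sum_(i < d.+1) c i t * t%:R ^+ i).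

From mathcomp Require Import all_boot all_order all_algebra.
From mathcomp Require Import zify ring lra.
Set Implicit Arguments. Unset Strict Implicit. Unset Printing Implicit Defensive.
Import Order.TTheory GRing.Theory Num.Theory.

(* The lattice points of t T, for T the triangle with vertices (0,0), (A/B,0),
   (0,B/A), are the (x,y) in N^2 with B^2 x + A^2 y <= A B t; count them column
   by column.  For n even, A = F_{n-1}, B = F_n and C = F_{n+1} satisfy Cassini's
   identity A C = B^2 + 1, and A, C are coprime because F_{n-1} = 1 (mod k).
   Raising t by B adds a strip of A new columns.  Raising t by B once more adds
   C - 1 points to each column x < A of the strip, plus one more except for the
   unique x < A with C x = B (t + B) (mod A): in total A C - 1 = B^2 points.  So
   the count has constant second difference B^2 with step B, and on each residue
   class of t mod B it is a quadratic polynomial in t.  Swapping the axes turns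
   T_{k,n+1} into the same situation with A and C exchanged. *)

Lemma FibSS k m : Fib k m.+2 = k * Fib k m.+1 + Fib k m.
Proof. by []. Qed.

Lemma Fib_gt0 k m : 0 < k -> 0 < Fib k m.+1.
Proof. by move=> k_gt0; elim: m => // m IHm; rewrite FibSS; nia. Qed.

Lemma Fib_cassini k m :
  if odd m then Fib k m * Fib k m.+2 = Fib k m.+1 ^ 2 + 1
  else Fib k m * Fib k m.+2 + 1 = Fib k m.+1 ^ 2.
Proof.
elim: m => [|m IHm] //.
move: IHm; rewrite (FibSS k m.+1) (FibSS k m) /=.
by case: (odd m) => /=; nia.
Qed.

Lemma coprime_FibS k m : coprime (Fib k m) (Fib k m.+1).
Proof. by elim: m => // m IHm; rewrite /coprime FibSS gcdnMDl gcdnC. Qed.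

Lemma Fib_odd_mod k m : odd m -> Fib k m = 1 %[mod k].
Proof.
move=> m_odd; rewrite -(odd_double_half m) m_odd add1n.
by elim: m./2 => // h IHh; rewrite doubleS FibSS mulnC modnMDl.
Qed.

Lemma coprime_Fib_pred_succ k n : ~~ odd n -> coprime (Fib k n.-1) (Fib k n.+1).
Proof.
case: n => // m; rewrite oddS negbK succnK => m_odd.
rewrite [Fib k m.+2]FibSS addnC /coprime gcdnDl -[_ == 1]/(coprime _ _).
rewrite coprimeMr coprime_FibS andbT.
by rewrite -coprime_modl Fib_odd_mod // coprime_modl coprime1n.
Qed.

Definition lattice_count (a b c : nat) : nat :=
  \sum_(0 <= x < (c %/ a).+1) ((c - a * x) %/ b).+1.

Definition lattice_seq (a b c : nat) : seq (int * int) :=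
  [seq (Posz x, Posz y) | x <- iota 0 (c %/ a).+1, y <- iota 0 ((c - a * x) %/ b).+1].

Definition under_line (a b c : nat) : pred (int * int) :=
  fun z => [&& 0 <= z.1, 0 <= z.2 & a%:Z * z.1 + b%:Z * z.2 <= c%:Z]%R.

Lemma lattice_seq_uniq a b c : uniq (lattice_seq a b c).
Proof.
apply: allpairs_uniq_dep => [|x _|[x1 y1] [x2 y2] _ _ [/= -> ->]] //;
  exact: iota_uniq.
Qed.

Lemma size_lattice_seq a b c : size (lattice_seq a b c) = lattice_count a b c.
Proof.
rewrite size_allpairs_dep sumnE big_map /lattice_count /index_iota subn0.
by apply: eq_bigr => x _; rewrite size_iota.
Qed.

Lemma mem_lattice_seq a b c z : 0 < a -> 0 < b ->
  (z \in lattice_seq a b c) = under_line a b c z.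
Proof.
move=> a_gt0 b_gt0; case: z => z1 z2; rewrite /under_line /=.
apply/allpairsPdep/idP => [[x [y [+ + [-> ->]]]] | /and3P[]].
  rewrite !mem_iota !add0n !ltnS !leq_divRL // => /andP[_ hx] /andP[_ hy].
  by rewrite -!PoszM -PoszD lez_nat; lia.
case: z1 => // x; case: z2 => // y _ _; rewrite -!PoszM -PoszD lez_nat => hxy.
exists x, y; rewrite !mem_iota !add0n !ltnS !leq_divRL //; split => //; lia.
Qed.

Lemma lattice_countC a b c : 0 < a -> 0 < b -> lattice_count a b c = lattice_count b a c.
Proof.
move=> a_gt0 b_gt0; rewrite -!size_lattice_seq.
pose swap (z : int * int) := (z.2, z.1).
have swapK : involutive swap by case.
rewrite -(size_map swap); apply/perm_size/uniq_perm.
- by rewrite map_inj_uniq ?lattice_seq_uniq //; exact: inv_inj.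
- exact: lattice_seq_uniq.
move=> z; rewrite -{1}(swapK z) (mem_map (inv_inj swapK)) !mem_lattice_seq //.
by rewrite /under_line /= andbCA addrC.
Qed.

Lemma eq_mul_mod_coprime A w x y : coprime A w -> x < A -> y < A ->
  w * x = w * y %[mod A] -> x = y.
Proof.
move=> co_Aw; wlog le_xy : x y / x <= y => [hwlog x_lt y_lt eq_wxy|x_lt y_lt].
  by case: (leqP x y) => [|/ltnW] le; [|symmetry]; apply: hwlog.
move/eqP; rewrite eq_sym eqn_mod_dvd ?leq_mul2l ?le_xy ?orbT //.
rewrite -mulnBr Gauss_dvdr // -eqn_mod_dvd // !modn_small // => /eqP; lia.
Qed.

Lemma count_mul_congr A w c : 0 < A -> coprime A w ->
  count (fun x => w * x == c %[mod A]) (iota 0 A) = 1.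
Proof.
move=> A_gt0 co_Aw; pose s := [seq w * x %% A | x <- iota 0 A].
have s_uniq : uniq s.
  rewrite map_inj_in_uniq ?iota_uniq // => x y; rewrite !mem_iota !add0n.
  by move=> x_lt y_lt; apply: eq_mul_mod_coprime.
have s_sub : {subset s <= iota 0 A}.
  by move=> _ /mapP[x _ ->]; rewrite mem_iota ltn_pmod.
have [_ s_iota] := uniq_min_size s_uniq s_sub (eq_leq (esym (size_map _ _))).
transitivity (count_mem (c %% A) s); first by rewrite count_map.
by rewrite count_uniq_mem // s_iota mem_iota ltn_pmod.
Qed.

Lemma divn_addpred K A : 0 < A -> (K + A.-1) %/ A = K %/ A + ~~ (A %| K).
Proof.
move=> A_gt0; rewrite {1}(divn_eq K A) -addnA divnMDl //; congr (_ + _).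
rewrite /dvdn; have := ltn_pmod K A_gt0.
case: (posnP (K %% A)) => [-> _|r_gt0 r_lt]; first by rewrite divn_small ?prednK.
by rewrite (_ : _ + _ = 1 * A + (K %% A).-1) ?divnMDl ?divn_small //; lia.
Qed.

Definition tri_count (A B t : nat) : nat := lattice_count (B * B) (A * A) (A * B * t).

Lemma tri_countC A B t : 0 < A -> 0 < B -> tri_count A B t = tri_count B A t.
Proof.
move=> A_gt0 B_gt0.
by rewrite /tri_count [B * A]mulnC lattice_countC // muln_gt0 ?A_gt0 ?B_gt0.
Qed.

Definition tri_strip (A B w t : nat) : nat :=
  \sum_(0 <= x < A) ((B * (t + B) - w * x) %/ A).+1.

Section TriCountRecurrence.

Variables A B w : nat.
Hypotheses (A_gt0 : 0 < A) (B_gt0 : 0 < B) (Aw : A * w = B * B + 1).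

Lemma mulw_le_sq x : x < A -> w * x <= B * B.
Proof. by move=> x_lt; nia. Qed.

Lemma tri_count_shift t : tri_count A B (t + B) = tri_count A B t + tri_strip A B w t.
Proof.
have top_shift : A * B * (t + B) %/ (B * B) = A * B * t %/ (B * B) + A.
  have -> : A * B * (t + B) = B * (A * B + A * t) by ring.
  have -> : A * B * t = B * (A * t) by ring.
  by rewrite !divnMl // divnMDl // addnC.
rewrite /tri_count /lattice_count top_shift -addSn.
rewrite (big_cat_nat _ (n := A)) ?leq_addl //= addnC.
congr (_ + _).
  rewrite -{1}(add0n A) big_addn addnK.
  apply: eq_big_nat => x _; congr (_ %/ _).+1.
  have -> : A * B * (t + B) = A * B * t + B * B * A by ring.
  by rewrite mulnDr subnDr.
apply: eq_big_nat => x /andP[_ x_lt]; have wx_le := mulw_le_sq x_lt.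
have wxA : w * x * A = B * B * x + x by rewrite mulnAC (mulnC w) Aw mulnDl mul1n.
have : w * x * A <= B * (t + B) * A.
  by rewrite leq_mul2r (leq_trans wx_le) ?orbT // leq_mul2l leq_addl orbT.
have -> : A * B * (t + B) = B * (t + B) * A by ring.
rewrite wxA => le_xA.
have -> : B * (t + B) * A - B * B * x = (B * (t + B) - w * x) * A + x.
  by rewrite mulnBl wxA; lia.
by rewrite divnMA divnMDl // (divn_small x_lt) addn0.
Qed.

Hypothesis co_Aw : coprime A w.

Lemma tri_strip_shift t : tri_strip A B w (t + B) = tri_strip A B w t + B * B.
Proof.
have w_gt0 : 0 < w by rewrite lt0n; apply/eqP => w0; move: Aw; rewrite w0 muln0 addn1.
have sqB : B * B = A.-1 + w.-1 * A.
  have : A * w.-1 + A = B * B + 1 by rewrite -mulnSr prednK.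
  by rewrite mulnC -subn1; move: (w.-1 * A); lia.
pose K x := B * (t + B) - w * x.
have wx_le x : x < A -> w * x <= B * (t + B).
  by move=> /mulw_le_sq /leq_trans; apply; rewrite leq_mul2l leq_addl orbT.
have step x : x < A ->
    ((B * (t + B + B) - w * x) %/ A).+1 = (K x %/ A).+1 + w.-1 + ~~ (A %| K x).
  move=> x_lt; have -> : B * (t + B + B) - w * x = K x + A.-1 + w.-1 * A.
    have := wx_le x x_lt; rewrite /K (mulnDr B (t + B) B) sqB.
    by move: (w.-1 * A) (B * (t + B)) (w * x) => X P Q; lia.
  by rewrite divnDMl // divn_addpred //; lia.
have nondiv_count : \sum_(0 <= x < A) ~~ (A %| K x) = A.-1.
  have div_count : count (fun x => A %| K x) (iota 0 A) = 1.
    rewrite -(count_mul_congr (B * (t + B)) A_gt0 co_Aw).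
    apply: eq_in_count => x; rewrite mem_iota add0n => /wx_le wx_le'.
    by rewrite eq_sym eqn_mod_dvd.
  have := count_predC (fun x => A %| K x) (iota 0 A).
  rewrite div_count size_iota => count_sum; rewrite -[in RHS]count_sum add1n /=.
  rewrite -sum1_count [RHS]big_mkcond /index_iota subn0.
  by apply: eq_bigr => x _ /=; case: (A %| K x).
transitivity (\sum_(0 <= x < A) ((K x %/ A).+1 + w.-1 + ~~ (A %| K x))).
  by apply: eq_big_nat => x /andP[_ /step].
rewrite !big_split /= sum_nat_const_nat subn0 nondiv_count sqB.
have -> : tri_strip A B w t = \sum_(0 <= x < A) (K x %/ A).+1 by [].
by rewrite -addnA (addnC (A * _)) (mulnC A).
Qed.

Lemma tri_count_second_difference t :
  tri_count A B (t + B + B) + tri_count A B t = (tri_count A B (t + B)).*2 + B * B.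
Proof. by rewrite !tri_count_shift tri_strip_shift -addnn; lia. Qed.

End TriCountRecurrence.

Local Open Scope ring_scope.

Section ConstantSecondDifference.

Variables (g : nat -> nat) (N C : nat).
Hypothesis g_second_difference :
  forall t, (g (t + N + N) + g t = (g (t + N)).*2 + C)%N.

Lemma second_difference_closed_form r j :
  (g (r + j * N))%:R = (g r)%:R + j%:R * ((g (r + N))%:R - (g r)%:R)
                       + C%:R * (j%:R * (j%:R - 1) / 2) :> rat.
Proof.
pose q (j : nat) : rat := (g r)%:R + j%:R * ((g (r + N))%:R - (g r)%:R)
                          + C%:R * (j%:R * (j%:R - 1) / 2).
suff : (g (r + j * N))%:R = q j /\ (g (r + j.+1 * N))%:R = q j.+1 by case.
elim: j => [|j [IHj IHj1]]; first by rewrite mul0n mul1n addn0 /q; split; ring.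
split => //; have := g_second_difference (r + j * N).
have shift i : (r + i * N + N = r + i.+1 * N)%N by rewrite mulSnr addnA.
rewrite !shift => /(congr1 (fun m : nat => m%:R : rat)).
rewrite !natrD -muln2 natrM IHj IHj1 => /(canRL (addrK _)) ->.
by rewrite /q !mulrS; field.
Qed.

Lemma quasi_period_of_second_difference (f : nat -> nat -> Prop) :
  (0 < N)%N -> (forall t, (1 <= t)%N -> f t (g t)) -> quasi_period f N.
Proof.
move=> N_gt0 f_g; split => //.
(* Substitute j = t %/ N = t / N + v t into the closed form at r = t %% N. *)
pose v t : rat := - (t %% N)%N%:R / N%:R.
pose d t : rat := (g (t %% N + N)%N)%:R - (g (t %% N))%:R.
pose c (i t : nat) : rat :=
  match i with
  | 0 => (g (t %% N))%:R + d t * v t + C%:R / 2 * (v t * (v t - 1))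
  | 1 => d t / N%:R + C%:R / 2 * ((2 * v t - 1) / N%:R)
  | _ => C%:R / 2 / N%:R ^+ 2
  end.
exists 2%N, c; split; first by move=> [|[|i]] t; rewrite /c /d /v ?modnDr.
move=> t t_ge1; exists (g t); split; first exact: f_g.
have N_neq0 : N%:R != 0 :> rat by rewrite pnatr_eq0 -lt0n.
have quotient_t : (t %/ N)%N%:R = t%:R / N%:R + v t.
  by rewrite {2}(divn_eq t N) natrD natrM /v; field.
rewrite {1}(divn_eq t N) addnC second_difference_closed_form quotient_t.
by rewrite !big_ord_recr big_ord0 /= /c /d; field.
Qed.

End ConstantSecondDifference.

Lemma in_dilate_axes_triangle (a b : rat) (t : nat) (p : rat * rat) :
  0 < a -> 0 < b -> (0 < t)%N ->
  in_dilate t TriV0 (a, 0) (0, b) p <->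
  [/\ 0 <= p.1, 0 <= p.2 & b * p.1 + a * p.2 <= a * b * t%:R].
Proof.
move=> a_gt0 b_gt0 t_gt0; have tR_gt0 : 0 < t%:R :> rat by rewrite ltr0n.
case: p => x y; split=> /=.
  move=> [_ [[l0 [l1 [l2 [[? ? ? ?] [/= -> ->]]]]] [-> ->]]].
  rewrite !(mulr0, add0r, addr0); split; try by rewrite !mulr_ge0 // ltW.
  have -> : b * (t%:R * (l1 * a)) + a * (t%:R * (l2 * b)) = a * b * t%:R * (l1 + l2).
    by ring.
  rewrite -[X in _ <= X]mulr1; apply: ler_wpM2l; [by rewrite !mulr_ge0 // ltW | lra].
move=> [x_ge0 y_ge0 xy_le].
pose l1 := x / (a * t%:R); pose l2 := y / (b * t%:R).
have l1_ge0 : 0 <= l1 by rewrite divr_ge0 // ltW ?mulr_gt0.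
have l2_ge0 : 0 <= l2 by rewrite divr_ge0 // ltW ?mulr_gt0.
have l12_le1 : l1 + l2 <= 1.
  have -> : l1 + l2 = (b * x + a * y) / (a * b * t%:R).
    by rewrite /l1 /l2; field; rewrite !gt_eqF.
  by rewrite ler_pdivrMr ?mulr_gt0 // mul1r.
exists (x / t%:R, y / t%:R); split.
  exists (1 - l1 - l2), l1, l2; split; first by split => //; lra.
  by rewrite /= /l1 /l2 !(mulr0, add0r, addr0); split; field; rewrite !gt_eqF.
by congr pair; rewrite /= mulrC divfK ?gt_eqF.
Qed.

Lemma in_dilate_lattice_pt (A B t : nat) (z : int * int) :
  (0 < A)%N -> (0 < B)%N -> (0 < t)%N ->
  in_dilate t TriV0 (A%:R / B%:R, 0) (0, B%:R / A%:R) (lattice_pt z) <->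
  under_line (B * B) (A * A) (A * B * t) z.
Proof.
move=> A_gt0 B_gt0 t_gt0; have AR_gt0 : 0 < A%:R :> rat by rewrite ltr0n.
have BR_gt0 : 0 < B%:R :> rat by rewrite ltr0n.
case: z => z1 z2; rewrite in_dilate_axes_triangle ?divr_gt0 // /under_line /= !ler0z.
have -> : (B%:R / A%:R * z1%:~R + A%:R / B%:R * z2%:~R
            <= A%:R / B%:R * (B%:R / A%:R) * t%:R :> rat)
          = ((B * B)%N%:Z * z1 + (A * A)%N%:Z * z2 <= (A * B * t)%N%:Z).
  rewrite -(ler_int rat) -(ler_pM2r (mulr_gt0 AR_gt0 BR_gt0)) intrD !intrM.
  by congr (_ <= _); rewrite -!pmulrn !natrM; field; rewrite !gt_eqF.
exact: (rwP and3P).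
Qed.

Lemma I_is_tri_count k n t : (0 < k)%N -> (2 <= n)%N -> (1 <= t)%N ->
  I_is k n t (tri_count (Fib k n.-1) (Fib k n) t).
Proof.
case: n => [|[|m]] // k_gt0 _ t_gt0.
have A_gt0 : (0 < Fib k m.+2.-1)%N := Fib_gt0 m k_gt0.
have B_gt0 : (0 < Fib k m.+2)%N := Fib_gt0 m.+1 k_gt0.
exists (lattice_seq (Fib k m.+2 * Fib k m.+2) (Fib k m.+1 * Fib k m.+1)
                   (Fib k m.+1 * Fib k m.+2 * t)).
split; [exact: lattice_seq_uniq | exact: size_lattice_seq |] => z.
by rewrite mem_lattice_seq ?muln_gt0 ?A_gt0 ?B_gt0 // -in_dilate_lattice_pt.
Qed.

Theorem theorem3p2 (k n : nat) :
  (1 <= k)%N -> (2 <= n)%N -> ~~ odd n ->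
  quasi_period (I_is k n) (Fib k n) /\ quasi_period (I_is k n.+1) (Fib k n).
Proof.
move=> k_gt0 n_ge2 n_even; have co_AC := coprime_Fib_pred_succ k n_even.
case: n n_ge2 n_even co_AC => [|m] // m_gt0; rewrite oddS negbK succnK => m_odd co_AC.
have := Fib_cassini k m; rewrite m_odd -mulnn => cassini.
have A_gt0 : (0 < Fib k m)%N by rewrite -(prednK m_gt0) Fib_gt0.
have B_gt0 := Fib_gt0 m k_gt0; have C_gt0 := Fib_gt0 m.+1 k_gt0.
split.
  apply: (quasi_period_of_second_difference (g := tri_count (Fib k m) (Fib k m.+1))
            (C := (Fib k m.+1 * Fib k m.+1)%N) _ B_gt0).
    exact: tri_count_second_difference A_gt0 B_gt0 cassini co_AC.
  by move=> t; apply: (@I_is_tri_count k m.+1 t).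
apply: (quasi_period_of_second_difference (g := tri_count (Fib k m.+2) (Fib k m.+1))
          (C := (Fib k m.+1 * Fib k m.+1)%N) _ B_gt0).
  have co_CA : coprime (Fib k m.+2) (Fib k m) by rewrite coprime_sym.
  by apply: (tri_count_second_difference C_gt0 B_gt0 _ co_CA); rewrite mulnC.
by move=> t t_gt0; rewrite tri_countC //; apply: (@I_is_tri_count k m.+2 t).
Qed.
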